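(* Let $A\subset\mathbb R^\tau$ be a compact max-min convex set and let $\xi\colon J(A)\to\mathbb R^\tau$ be defined by $\xi(\mu)=(\mu(p_\alpha))_{\alpha<\tau}$, where $p_\alpha\colon A\to\mathbb R$ is the $\alpha$-th coordinate projection. Then $\xi(J(A))\subset A$.
   Context: A max-min measure on a compact Hausdorff space $X$ is a functional $\mu\colon C(X)\to\mathbb R$ (not assumed continuous) with $\mu(c_X)=c$ for constants, $\mu(\varphi\vee\psi)=\mu(\varphi)\vee\mu(\psi)$, $\mu(c\wedge\varphi)=c\wedge\mu(\varphi)$ for $c\in\mathbb R$; $J(X)$ is the set of max-min measures with the topology of pointwise convergence on $C(X)$. $\mathbb R^\tau$ carries the product topology. A subset $A\subset\mathbb R^\tau$ is max-min convex if $x\vee(\lambda\wedge y)\in A$ for all $x,y\in A$, $\lambda\in\mathbb R$ (coordinatewise operations). *)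

From Stdlib Require Import Reals List.
Open Scope R_scope.

Definition prod_open {tau : Type} (U : (tau -> R) -> Prop) : Prop :=
  forall x, U x -> exists (l : list tau) (eps : R), 0 < eps /\
    forall y, (forall i, In i l -> Rabs (y i - x i) < eps) -> U y.

Definition prod_compact {tau : Type} (A : (tau -> R) -> Prop) : Prop :=
  forall (I : Type) (U : I -> (tau -> R) -> Prop),
    (forall k, prod_open (U k)) ->
    (forall x, A x -> exists k, U k x) ->
    exists l : list I, forall x, A x -> exists k, In k l /\ U k x.

Definition maxmin_convex {tau : Type} (A : (tau -> R) -> Prop) : Prop :=
  forall x y, A x -> A y -> forall lam : R,
    A (fun i => Rmax (x i) (Rmin lam (y i))).

Definition Sub {tau : Type} (A : (tau -> R) -> Prop) : Type :=
  { x : tau -> R | A x }.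

Definition cont_on {tau : Type} {A : (tau -> R) -> Prop} (f : Sub A -> R) : Prop :=
  forall (x : Sub A) (eps : R), 0 < eps ->
    exists (l : list tau) (delta : R), 0 < delta /\
      forall y : Sub A,
        (forall i, In i l -> Rabs (proj1_sig y i - proj1_sig x i) < delta) ->
        Rabs (f y - f x) < eps.

(* A max-min measure on A: a functional on C(A).  We represent it as a map on
   all functions A -> R, imposing the axioms only on continuous functions
   (values on non-continuous functions are irrelevant). *)
Definition maxmin_measure {tau : Type} {A : (tau -> R) -> Prop}
    (mu : (Sub A -> R) -> R) : Prop :=
  (forall c : R, mu (fun _ => c) = c) /\
  (forall phi psi : Sub A -> R, cont_on phi -> cont_on psi ->
     mu (fun x => Rmax (phi x) (psi x)) = Rmax (mu phi) (mu psi)) /\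
  (forall (c : R) (phi : Sub A -> R), cont_on phi ->
     mu (fun x => Rmin c (phi x)) = Rmin c (mu phi)).

Definition proj_coord {tau : Type} {A : (tau -> R) -> Prop} (a : tau) : Sub A -> R :=
  fun x => proj1_sig x a.

Definition xi {tau : Type} {A : (tau -> R) -> Prop} (mu : (Sub A -> R) -> R) : tau -> R :=
  fun a => mu (proj_coord a).

(* Let A be a compact max-min convex subset of R^tau, mu a max-min measure on
   A and x = xi(mu), i.e. x_k = mu(p_k).  We show that x is adherent to A (every
   basic neighbourhood of x meets A); since a compact subset of the Hausdorff
   space R^tau is closed, x lies in A.

   The heart of the argument is a "coordinate control" principle: if every
   point b of A with psi(b) > lam has a coordinate k with
   mu(p_k) + eps <= min(lam, b_k), then mu(psi) <= lam.  It is proved by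
   dominating min(lam', psi) by a finite maximum of "steepened" coordinate
   functions, whose measures are still mu(p_k) < lam; monotonicity of mu then
   bounds mu(psi).  Its contrapositive provides points of A with prescribed
   coordinate behaviour, and max-min convexity glues finitely many of them
   into a point of A eps-close to x on any finite set of coordinates. *)

From Stdlib Require Import Reals.
From Stdlib Require Import Lra List Classical FunctionalExtensionality.
Open Scope R_scope.

Lemma Rmax_lip (a b c d : R) :
  Rabs (Rmax a b - Rmax c d) <= Rmax (Rabs (a - c)) (Rabs (b - d)).
Proof.
  unfold Rmax, Rabs; repeat destruct Rcase_abs; repeat destruct Rle_dec; lra.
Qed.

Lemma Rmin_lip (c u v : R) : Rabs (Rmin c u - Rmin c v) <= Rabs (u - v).
Proof.
  unfold Rmin, Rabs; repeat destruct Rcase_abs; repeat destruct Rle_dec; lra.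
Qed.

Lemma list_upper_bound {I : Type} (f : I -> R) (l : list I) :
  exists c, forall p, In p l -> f p <= c.
Proof.
  induction l as [|a l [c Hc]]; [exists 0; simpl; tauto|].
  exists (Rmax (f a) c). intros p [<-|Hp]; [apply Rmax_l|].
  eapply Rle_trans; [apply Hc; exact Hp| apply Rmax_r].
Qed.

Lemma list_pos_lower_bound {I : Type} (f : I -> R) (l : list I) :
  (forall p, In p l -> 0 < f p) -> exists e, 0 < e /\ forall p, In p l -> e <= f p.
Proof.
  induction l as [|a l IH]; intros Hpos; [exists 1; simpl; split; [lra| tauto]|].
  destruct IH as [e [He Hle]]; [intros p Hp; apply Hpos; right; exact Hp|].
  exists (Rmin (f a) e). split; [apply Rmin_glb_lt; auto; apply Hpos; left; auto|].
  intros p [<-|Hp]; [apply Rmin_l|].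
  eapply Rle_trans; [apply Rmin_r| apply Hle; exact Hp].
Qed.

Section ProductTopology.

Context {tau : Type}.

Definition prod_adherent (A : (tau -> R) -> Prop) (x : tau -> R) : Prop :=
  forall (l : list tau) (eps : R), 0 < eps ->
    exists a, A a /\ forall i, In i l -> Rabs (a i - x i) < eps.

Lemma coord_slab_open (i : tau) (r d : R) :
  prod_open (fun y : tau -> R => Rabs (y i - r) < d).
Proof.
  intros y Hy. exists (i :: nil), (d - Rabs (y i - r)). split; [lra|].
  intros z Hz. specialize (Hz i (or_introl eq_refl)).
  pose proof (Rabs_triang (z i - y i) (y i - r)) as T.
  replace (z i - y i + (y i - r)) with (z i - r) in T by ring. lra.
Qed.

(* Otherwise the slabs around pairs (i, r) with
   r <> x_i, of radius |r - x_i|/2, cover A but a finite subfamily of them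
   stays away from a neighbourhood of x. *)
Lemma compact_closed (A : (tau -> R) -> Prop) (x : tau -> R) :
  prod_compact A -> prod_adherent A x -> A x.
Proof.
  intros Hcomp Hadh. apply NNPP; intros Hx.
  set (I := {p : tau * R | snd p <> x (fst p)}).
  set (radius := fun p : I => Rabs (snd (proj1_sig p) - x (fst (proj1_sig p))) / 2).
  set (slab := fun (p : I) (y : tau -> R) =>
         Rabs (y (fst (proj1_sig p)) - snd (proj1_sig p)) < radius p).
  assert (Hrad : forall p, 0 < radius p).
  { intros [[i r] Hr]. unfold radius; simpl in *.
    assert (0 < Rabs (r - x i)) by (apply Rabs_pos_lt; lra). lra. }
  destruct (Hcomp I slab) as [L HL].
  - intros p. apply coord_slab_open.
  - intros a Ha.
    assert (Hdiff : exists i, a i <> x i).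
    { apply not_all_ex_not. intros Heq. apply Hx.
      replace x with a; [exact Ha| apply functional_extensionality; exact Heq]. }
    destruct Hdiff as [i Hi].
    exists (exist (fun p : tau * R => snd p <> x (fst p)) (i, a i) Hi).
    unfold slab. simpl. rewrite Rminus_diag, Rabs_R0. apply Hrad.
  - destruct (list_pos_lower_bound radius L) as [e [He Hle]]; [intros; apply Hrad|].
    destruct (Hadh (map (fun p : I => fst (proj1_sig p)) L) e He) as [a [Ha Hclose]].
    destruct (HL a Ha) as [p [Hp Hslab]].
    specialize (Hle p Hp).
    specialize (Hclose _ (in_map (fun p : I => fst (proj1_sig p)) L p Hp)).
    unfold slab, radius in *. destruct p as [[i r] Hr]; simpl in *.
    pose proof (Rabs_triang (r - a i) (a i - x i)) as T.
    replace (r - a i + (a i - x i)) with (r - x i) in T by ring.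
    rewrite Rabs_minus_sym in Hslab. lra.
Qed.

End ProductTopology.

Definition steep (s L u : R) : R := Rmax u (s + L * (u - s)).

Lemma steep_lip (s L : R) : 1 <= L ->
  forall u v, Rabs (steep s L u - steep s L v) <= L * Rabs (u - v).
Proof.
  intros HL u v. unfold steep.
  eapply Rle_trans; [apply Rmax_lip|].
  replace (s + L * (u - s) - (s + L * (v - s))) with (L * (u - v)) by ring.
  rewrite Rabs_mult, (Rabs_pos_eq L) by lra.
  apply Rmax_lub; [|lra].
  assert (0 <= Rabs (u - v)) by apply Rabs_pos. nra.
Qed.

Lemma steep_trunc (s L u : R) : 1 <= L -> Rmin s (steep s L u) = Rmin s u.
Proof. intros HL. unfold steep, Rmin, Rmax; repeat destruct Rle_dec; nra. Qed.

Lemma steep_reaches (s d c u : R) : 0 < d -> s + d <= u ->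
  c <= steep s (1 + Rabs (c - s) / d) u.
Proof.
  intros Hd Hu. unfold steep. eapply Rle_trans; [|apply Rmax_r].
  assert (E : (1 + Rabs (c - s) / d) * d = d + Rabs (c - s)) by (field; lra).
  assert (0 <= Rabs (c - s) / d) by (apply Rmult_le_pos; [apply Rabs_pos| left; apply Rinv_0_lt_compat; lra]).
  assert ((1 + Rabs (c - s) / d) * d <= (1 + Rabs (c - s) / d) * (u - s))
    by (apply Rmult_le_compat_l; lra).
  pose proof (Rle_abs (c - s)). lra.
Qed.

Lemma steep_slope_ge1 (c s d : R) : 0 < d -> 1 <= 1 + Rabs (c - s) / d.
Proof.
  intros Hd. assert (0 <= Rabs (c - s) / d); [|lra].
  apply Rmult_le_pos; [apply Rabs_pos| left; apply Rinv_0_lt_compat; lra].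
Qed.

Section Continuity.

Context {tau : Type} {A : (tau -> R) -> Prop}.

Lemma cont_const (c : R) : @cont_on tau A (fun _ => c).
Proof.
  intros x e He. exists nil, 1. split; [lra|]. intros y _.
  rewrite Rminus_diag, Rabs_R0; lra.
Qed.

Lemma cont_proj (k : tau) : @cont_on tau A (proj_coord k).
Proof.
  intros x e He. exists (k :: nil), e. split; [lra|]. intros y Hy.
  apply Hy; simpl; auto.
Qed.

Lemma cont_lip (phi : Sub A -> R) (g : R -> R) (K : R) :
  0 < K -> (forall u v, Rabs (g u - g v) <= K * Rabs (u - v)) ->
  cont_on phi -> cont_on (fun b => g (phi b)).
Proof.
  intros HK Hg Hc x e He.
  destruct (Hc x (e / K)) as [l [d [Hd Hl]]]; [apply Rdiv_lt_0_compat; lra|].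
  exists l, d. split; auto. intros y Hy.
  specialize (Hl y Hy). specialize (Hg (phi y) (phi x)).
  assert (K * Rabs (phi y - phi x) < K * (e / K)) by (apply Rmult_lt_compat_l; lra).
  assert (K * (e / K) = e) by (field; lra). lra.
Qed.

Lemma cont_max (phi psi : Sub A -> R) :
  cont_on phi -> cont_on psi -> cont_on (fun b => Rmax (phi b) (psi b)).
Proof.
  intros H1 H2 x e He.
  destruct (H1 x e He) as [l1 [d1 [Hd1 Hl1]]].
  destruct (H2 x e He) as [l2 [d2 [Hd2 Hl2]]].
  exists (l1 ++ l2), (Rmin d1 d2). split; [apply Rmin_glb_lt; auto|].
  intros y Hy.
  assert (C1 : Rabs (phi y - phi x) < e).
  { apply Hl1. intros i Hi. eapply Rlt_le_trans;
      [apply Hy, in_or_app; auto| apply Rmin_l]. }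
  assert (C2 : Rabs (psi y - psi x) < e).
  { apply Hl2. intros i Hi. eapply Rlt_le_trans;
      [apply Hy, in_or_app; auto| apply Rmin_r]. }
  eapply Rle_lt_trans; [apply Rmax_lip| apply Rmax_lub_lt; auto].
Qed.

Lemma cont_min_const (c : R) (phi : Sub A -> R) :
  cont_on phi -> cont_on (fun b => Rmin c (phi b)).
Proof.
  intros H. apply (cont_lip phi (Rmin c) 1); [lra| |exact H].
  intros u v. rewrite Rmult_1_l. apply Rmin_lip.
Qed.

Lemma cont_steep_coord (k : tau) (s L : R) : 1 <= L ->
  cont_on (fun b : Sub A => steep s L (proj_coord k b)).
Proof.
  intros HL. apply (cont_lip _ (steep s L) L); [lra| apply steep_lip; exact HL|].
  apply cont_proj.
Qed.

Definition max_family (c : R) (f : tau -> Sub A -> R) (l : list tau) : Sub A -> R :=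
  fold_right (fun k (acc : Sub A -> R) b => Rmax (f k b) (acc b)) (fun _ => c) l.

Lemma cont_max_family (c : R) (f : tau -> Sub A -> R) (l : list tau) :
  (forall k, cont_on (f k)) -> cont_on (max_family c f l).
Proof.
  intros Hf. induction l as [|k l IH]; simpl; [apply cont_const| apply cont_max; auto].
Qed.

Lemma max_family_ge (c : R) (f : tau -> Sub A -> R) (l : list tau) (b : Sub A) :
  c <= max_family c f l b /\ forall k, In k l -> f k b <= max_family c f l b.
Proof.
  induction l as [|k l [IH1 IH2]]; simpl; [split; [lra| tauto]|]. split.
  - eapply Rle_trans; [exact IH1| apply Rmax_r].
  - intros j [<-|Hj]; [apply Rmax_l|].
    eapply Rle_trans; [apply IH2; exact Hj| apply Rmax_r].
Qed.

End Continuity.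

Section MaxMinMeasure.

Context {tau : Type} {A : (tau -> R) -> Prop}.
Variable mu : (Sub A -> R) -> R.
Hypothesis Hmu : maxmin_measure mu.

Lemma mu_const (c : R) : mu (fun _ => c) = c.
Proof. apply (proj1 Hmu). Qed.

Lemma mu_max (phi psi : Sub A -> R) : cont_on phi -> cont_on psi ->
  mu (fun b => Rmax (phi b) (psi b)) = Rmax (mu phi) (mu psi).
Proof. apply (proj1 (proj2 Hmu)). Qed.

Lemma mu_min_const (c : R) (phi : Sub A -> R) : cont_on phi ->
  mu (fun b => Rmin c (phi b)) = Rmin c (mu phi).
Proof. apply (proj2 (proj2 Hmu)). Qed.

(* Max-preservation forces monotonicity. *)
Lemma mu_mono (phi psi : Sub A -> R) : cont_on phi -> cont_on psi ->
  (forall b, phi b <= psi b) -> mu phi <= mu psi.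
Proof.
  intros Hp Hq Hle.
  assert (E : (fun b => Rmax (phi b) (psi b)) = psi).
  { apply functional_extensionality. intros b. apply Rmax_right; auto. }
  pose proof (mu_max phi psi Hp Hq) as H. rewrite E in H. rewrite H. apply Rmax_l.
Qed.

Lemma mu_same_truncation (s : R) (phi psi : Sub A -> R) :
  cont_on phi -> cont_on psi -> mu phi < s ->
  (forall b, Rmin s (phi b) = Rmin s (psi b)) -> mu psi = mu phi.
Proof.
  intros Hp Hq Hs Htr.
  assert (E : (fun b => Rmin s (phi b)) = (fun b => Rmin s (psi b)))
    by (apply functional_extensionality; exact Htr).
  pose proof (f_equal mu E) as Ea.
  rewrite (mu_min_const s phi Hp), (mu_min_const s psi Hq) in Ea.
  revert Ea. unfold Rmin; repeat destruct Rle_dec; lra.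
Qed.

Lemma mu_steep_coord (k : tau) (s L : R) : mu (proj_coord k) < s -> 1 <= L ->
  mu (fun b => steep s L (proj_coord k b)) = mu (proj_coord k).
Proof.
  intros Hs HL.
  apply (mu_same_truncation s); [apply cont_proj| apply cont_steep_coord; exact HL| exact Hs|].
  intros b. symmetry. apply steep_trunc. exact HL.
Qed.

Lemma mu_max_family (c : R) (f : tau -> Sub A -> R) (l : list tau) :
  (forall k, cont_on (f k)) -> (forall k, In k l -> mu (f k) <= c) ->
  mu (max_family c f l) <= c.
Proof.
  intros Hc Hle. induction l as [|k l IH]; simpl; [rewrite mu_const; lra|].
  rewrite mu_max; [| apply Hc| apply cont_max_family; exact Hc].
  apply Rmax_lub; [apply Hle; left; reflexivity|].
  apply IH. intros j Hj. apply Hle. right. exact Hj.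
Qed.

(* Indeed min(lam', psi), for lam' between lam and mu(psi), is dominated by the
   maximum of lam and the coordinates k with mu(p_k) + eps <= lam, each
   steepened so as to reach lam' once b_k >= mu(p_k) + eps; that maximum has
   measure <= lam. *)
Lemma coordinate_control (l : list tau) (eps lam : R) (psi : Sub A -> R) :
  0 < eps -> cont_on psi ->
  (forall b, lam < psi b -> exists k, In k l /\
     mu (proj_coord k) + eps <= Rmin lam (proj1_sig b k)) ->
  mu psi <= lam.
Proof.
  intros He Hpsi Hcov. apply Rnot_lt_le. intros Hlt.
  set (lam' := (lam + mu psi) / 2).
  set (s := fun k => mu (proj_coord k) + eps / 2).
  set (L := fun k => 1 + Rabs (lam' - s k) / (eps / 2)).
  set (f := fun k (b : Sub A) =>
         if Rle_dec (mu (proj_coord k) + eps) lam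
         then steep (s k) (L k) (proj_coord k b) else lam).
  assert (HL : forall k, 1 <= L k) by (intros k; apply steep_slope_ge1; lra).
  assert (Hfc : forall k, cont_on (f k)).
  { intros k. unfold f. destruct Rle_dec;
      [apply cont_steep_coord, HL| apply cont_const]. }
  assert (Hfm : forall k, mu (f k) <= lam).
  { intros k. unfold f. destruct Rle_dec.
    - rewrite mu_steep_coord; [lra| unfold s; lra| apply HL].
    - rewrite mu_const. lra. }
  assert (Hdom : forall b, Rmin lam' (psi b) <= max_family lam f l b).
  { intros b. destruct (max_family_ge lam f l b) as [Hge1 Hge2].
    destruct (Rle_dec (psi b) lam) as [Hb|Hb].
    - pose proof (Rmin_r lam' (psi b)). lra.
    - destruct (Hcov b) as [k [Hk Hkb]]; [lra|].
      pose proof (Rmin_l lam (proj1_sig b k)). pose proof (Rmin_r lam (proj1_sig b k)).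
      eapply Rle_trans; [|apply (Hge2 k Hk)].
      unfold f. destruct Rle_dec; [|lra].
      eapply Rle_trans; [apply Rmin_l|].
      apply steep_reaches; [lra|].
      change (proj_coord k b) with (proj1_sig b k). unfold s. lra. }
  pose proof (mu_mono _ _ (cont_min_const lam' psi Hpsi) (cont_max_family lam f l Hfc)
                Hdom) as Hmono.
  pose proof (mu_max_family lam f l Hfc (fun k _ => Hfm k)) as Hbound.
  rewrite mu_min_const in Hmono by exact Hpsi.
  unfold lam' in *. revert Hmono. unfold Rmin. destruct Rle_dec; lra.
Qed.

Lemma coordinate_witness (l : list tau) (eps lam : R) (psi : Sub A -> R) :
  0 < eps -> cont_on psi -> lam < mu psi ->
  exists b : Sub A, lam < psi b /\
    forall k, In k l -> Rmin lam (proj1_sig b k) < mu (proj_coord k) + eps.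
Proof.
  intros He Hpsi Hlt. apply NNPP. intros Hno.
  apply (Rlt_not_le _ _ Hlt). apply (coordinate_control l eps); auto.
  intros b Hb. apply NNPP. intros Hnk. apply Hno. exists b. split; [exact Hb|].
  intros k Hk. apply Rnot_le_lt. intros Hge. apply Hnk. exists k. auto.
Qed.

Lemma upper_witness (l : list tau) (eps : R) : 0 < eps ->
  exists b : Sub A, forall k, In k l -> proj1_sig b k < mu (proj_coord k) + eps.
Proof.
  intros He.
  destruct (list_upper_bound (fun k => mu (proj_coord k) + eps) l) as [lam Hlam].
  destruct (coordinate_witness l eps lam (fun _ => lam + 1) He (cont_const _))
    as [b [_ Hb]]; [rewrite mu_const; lra|].
  exists b. intros k Hk. specialize (Hb k Hk). specialize (Hlam k Hk). simpl in Hlam.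
  revert Hb. unfold Rmin. destruct Rle_dec; lra.
Qed.

Lemma lower_witness (l : list tau) (eps : R) (i : tau) : 0 < eps ->
  exists b : Sub A, mu (proj_coord i) - eps / 2 < proj1_sig b i /\
    forall k, In k l ->
      Rmin (mu (proj_coord i) - eps / 2) (proj1_sig b k) < mu (proj_coord k) + eps.
Proof.
  intros He. apply (coordinate_witness l eps _ (proj_coord i)); [exact He| apply cont_proj| lra].
Qed.

(* xi(mu) is adherent to a max-min convex set A: starting from an upper
   witness, max-min convex combinations with lower witnesses raise the listed
   coordinates one at a time above xi(mu) - eps, keeping them below
   xi(mu) + eps. *)
Lemma xi_adherent : maxmin_convex A -> prod_adherent A (xi mu).
Proof.
  intros Hconv l eps He.
  assert (Hind : forall l', exists a, A a /\
     (forall k, In k l -> a k < mu (proj_coord k) + eps) /\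
     (forall j, In j l' -> mu (proj_coord j) - eps < a j)).
  { induction l' as [|i l' IH].
    - destruct (upper_witness l eps He) as [b Hb].
      exists (proj1_sig b). split; [apply (proj2_sig b)| split; [exact Hb| simpl; tauto]].
    - destruct IH as [a [Ha [Hup Hlow]]].
      destruct (lower_witness l eps i He) as [b [Hbi Hbl]].
      set (c := mu (proj_coord i) - eps / 2).
      exists (fun j => Rmax (a j) (Rmin c (proj1_sig b j))).
      split; [apply Hconv; [exact Ha| apply (proj2_sig b)]|]. split.
      + intros k Hk. apply Rmax_lub_lt; [apply Hup| apply Hbl]; exact Hk.
      + intros j [<-|Hj].
        * eapply Rlt_le_trans; [|apply Rmax_r].
          unfold c. unfold Rmin. destruct Rle_dec; lra.
        * eapply Rlt_le_trans; [apply Hlow; exact Hj| apply Rmax_l]. }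
  destruct (Hind l) as [a [Ha [Hup Hlow]]].
  exists a. split; [exact Ha|]. intros k Hk. unfold xi.
  specialize (Hup k Hk). specialize (Hlow k Hk). apply Rabs_def1; lra.
Qed.

End MaxMinMeasure.

Theorem mainTheorem19 (tau : Type) (A : (tau -> R) -> Prop) :
  prod_compact A -> maxmin_convex A ->
  forall mu : (Sub A -> R) -> R, maxmin_measure mu -> A (xi mu).
Proof.
  intros Hcomp Hconv mu Hmu.
  apply compact_closed; [exact Hcomp|].
  exact (xi_adherent mu Hmu Hconv).
Qed.
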